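(* Let $0<q<1/2$, $p=1-q$, and for integers $z\ge1$ let $$P(z)=1-\sum_{k=0}^{z-1}\left(p^zq^k-q^zp^k\right)\binom{k+z-1}{k},\qquad P_{SN}(z)=1-\sum_{k=0}^{z-1}e^{-zq/p}\frac{(zq/p)^k}{k!}\left(1-\left(\frac qp\right)^{z-k}\right).$$ Let $\psi(p)=\frac qp-1-\log\frac qp-\log\frac{1}{4pq}$ (which is $>0$), let $$z_0^*=\max\left(\frac{2}{\pi\left(1-\frac qp\right)^2},\ \frac{1}{2\sqrt2}-\frac{1+\frac1{\sqrt2}}{2}\,\frac{\log\left(\frac{2\psi(p)}{\pi}\right)}{\psi(p)}\right),$$ and let $z_0=\lceil z_0^*\rceil$. Then for every integer $z\ge z_0$ we have $P_{SN}(z)<P(z)$.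
   Context: $P(z)$ is the exact probability of success of a double-spend attack by attackers with relative hash power $q$ after $z$ confirmations, and $P_{SN}(z)$ is Nakamoto's approximation of it. *)

From Stdlib Require Import Reals Lra Lia ZArith.
Open Scope R_scope.

Definition P_exact (q : R) (z : nat) : R :=
  let p := 1 - q in
  1 - sum_f_R0 (fun k => (p ^ z * q ^ k - q ^ z * p ^ k) * Binomial.C (k + z - 1) k)
        (z - 1).

Definition P_SN (q : R) (z : nat) : R :=
  let p := 1 - q in
  let lam := INR z * q / p in
  1 - sum_f_R0 (fun k => exp (- lam) * lam ^ k / INR (fact k) * (1 - (q / p) ^ (z - k)))
        (z - 1).

Definition psi (q : R) : R :=
  let p := 1 - q in
  q / p - 1 - ln (q / p) - ln (1 / (4 * p * q)).

Definition z0_star (q : R) : R :=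
  let p := 1 - q in
  Rmax (2 / (PI * (1 - q / p) ^ 2))
       (1 / (2 * sqrt 2) - (1 + 1 / sqrt 2) / 2 * (ln (2 * psi q / PI) / psi q)).

Definition ceilZ (x : R) : Z := (- Int_part (- x))%Z.

Definition z0 (q : R) : Z := ceilZ (z0_star q).

(* Write z = n + 1, p = 1 - q and r = q / p.  By the complement identity for negative
   binomial sums, P(z) = 2 sum_(k <= n) C(n + k, k) q^z p^k, and bounding p^k below by p^n
   and summing the binomials (hockey stick) gives P(z) >= (4pq)^z b_z / p, where
   b_z = C(2z, z) / 4^z.  In P_SN(z) the Poisson weights recombine into
   e^(-rz) [(e^(rz) - S_n(rz)) + r^z S_n(z)], with S_n the partial sum of the exponential
   series; the tail of that series at rz is at most r^z times its tail at z, hence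
   P_SN(z) <= e^(-rz) r^z e^z = (4pq)^z e^(-z psi).  Finally b_z^2 >= 1 / (16z/5 + 4/5) by
   induction on z, while beyond the second branch of z0* the convexity of the exponential
   gives e^(2 z psi) >= 16z/5 + 4/5; so e^(-z psi) <= b_z < b_z / p. *)

From Stdlib Require Import Reals ZArith Lra Lia.
Open Scope R_scope.

Lemma pow_antimono_le1 (r : R) (k m : nat) :
  0 <= r <= 1 -> (k <= m)%nat -> r ^ m <= r ^ k.
Proof.
  intros Hr Hkm. replace m with (k + (m - k))%nat by lia. rewrite pow_add.
  assert (0 <= r ^ k) by (apply pow_le; lra).
  assert (r ^ (m - k) <= 1) by (rewrite <- (pow1 (m - k)); apply pow_incr; lra).
  nra.
Qed.

Lemma sum_f_R0_le_at_sign_change (c : nat -> R) (n N : nat) :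
  (forall k, (k <= n)%nat -> 0 <= c k) -> (forall k, (n < k)%nat -> c k <= 0) ->
  sum_f_R0 c N <= sum_f_R0 c n.
Proof.
  intros Hpos Hneg. destruct (Nat.le_ge_cases N n) as [HN | HN].
  - assert (Hup : forall d, (N + d <= n)%nat -> sum_f_R0 c N <= sum_f_R0 c (N + d)).
    { induction d as [|d IH]; intros Hd; rewrite ?Nat.add_0_r; [apply Rle_refl|].
      rewrite Nat.add_succ_r. simpl. assert (0 <= c (S (N + d))) by (apply Hpos; lia).
      specialize (IH ltac:(lia)). lra. }
    replace n with (N + (n - N))%nat by lia. apply Hup. lia.
  - assert (Hdown : forall d, sum_f_R0 c (n + d) <= sum_f_R0 c n).
    { induction d as [|d IH]; rewrite ?Nat.add_0_r; [apply Rle_refl|].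
      rewrite Nat.add_succ_r. simpl. assert (c (S (n + d)) <= 0) by (apply Hneg; lia).
      lra. }
    replace N with (n + (N - n))%nat by lia. apply Hdown.
Qed.

Lemma Un_cv_const (l : R) : Un_cv (fun _ => l) l.
Proof. intros e He. exists O. intros. unfold Rdist. rewrite Rminus_diag, Rabs_R0. lra. Qed.

Definition exp_term (x : R) (k : nat) : R := x ^ k / INR (fact k).

Lemma exp_term_nonneg (x : R) (k : nat) : 0 <= x -> 0 <= exp_term x k.
Proof.
  intros Hx. apply Rmult_le_pos; [apply pow_le; lra | left; apply Rinv_0_lt_compat, INR_fact_lt_0].
Qed.

Lemma exp_series_cv (x : R) : Un_cv (sum_f_R0 (exp_term x)) (exp x).
Proof.
  unfold exp. destruct (exist_exp x) as [l Hl]. simpl.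
  apply (Un_cv_ext (sum_f_R0 (fun k => / INR (fact k) * x ^ k))); [|exact Hl].
  intros n. apply sum_eq. intros k _. unfold exp_term, Rdiv. ring.
Qed.

Lemma exp_partial_sum_le (x : R) (n : nat) : 0 <= x -> sum_f_R0 (exp_term x) n <= exp x.
Proof.
  intros Hx. apply sum_incr; [apply exp_series_cv | intros; apply exp_term_nonneg; lra].
Qed.

Lemma exp_ge_cubic (x : R) : 0 <= x -> 1 + x + x ^ 2 / 2 + x ^ 3 / 6 <= exp x.
Proof.
  intros Hx. eapply Rle_trans; [|apply (exp_partial_sum_le x 3 Hx)].
  unfold exp_term. simpl. lra.
Qed.

Lemma exp_1_ge : 8 / 3 <= exp 1.
Proof. assert (H := exp_ge_cubic 1 ltac:(lra)). lra. Qed.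

Lemma exp_ge_e_mul (x : R) : exp 1 * x <= exp x.
Proof.
  replace x with (1 + (x - 1)) at 2 by ring. rewrite exp_plus.
  assert (H := exp_ineq1_le (x - 1)). assert (0 < exp 1) by apply exp_pos. nra.
Qed.

(* The partial sums of [(r ^ k - r ^ S n) * exp_term y k] increase up to [n] and decrease
   afterwards, so their limit is at most their value at [n]. *)
Lemma exp_tail_scale (r y : R) (n : nat) : 0 <= y -> 0 <= r <= 1 ->
  exp (r * y) - sum_f_R0 (exp_term (r * y)) n
  <= r ^ S n * (exp y - sum_f_R0 (exp_term y) n).
Proof.
  intros Hy Hr.
  set (c k := exp_term (r * y) k - r ^ S n * exp_term y k).
  assert (Hc : forall N, sum_f_R0 c N
                         = sum_f_R0 (exp_term (r * y)) N - r ^ S n * sum_f_R0 (exp_term y) N).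
  { intros N. unfold c. rewrite minus_sum, scal_sum. f_equal. apply sum_eq.
    intros; ring. }
  assert (Hcv : Un_cv (sum_f_R0 c) (exp (r * y) - r ^ S n * exp y)).
  { apply (Un_cv_ext (fun N => sum_f_R0 (exp_term (r * y)) N
                                - r ^ S n * sum_f_R0 (exp_term y) N));
      [intros; symmetry; apply Hc|].
    apply CV_minus; [apply exp_series_cv|].
    apply CV_mult; [apply Un_cv_const | apply exp_series_cv]. }
  assert (Hsign : forall k, c k = (r ^ k - r ^ S n) * exp_term y k).
  { intros k. unfold c, exp_term. rewrite Rpow_mult_distr. unfold Rdiv. ring. }
  assert (Hmax : forall N, sum_f_R0 c N <= sum_f_R0 c n).
  { intros N. apply sum_f_R0_le_at_sign_change; intros k Hk; rewrite Hsign;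
      assert (0 <= exp_term y k) by (apply exp_term_nonneg; lra).
    - assert (r ^ S n <= r ^ k) by (apply pow_antimono_le1; [lra | lia]). nra.
    - assert (r ^ k <= r ^ S n) by (apply pow_antimono_le1; [lra | lia]). nra. }
  assert (exp (r * y) - r ^ S n * exp y <= sum_f_R0 c n).
  { eapply Rle_cv_lim; [exact Hmax | exact Hcv | apply Un_cv_const]. }
  rewrite Hc in H. lra.
Qed.

Lemma linear_le_exp_beyond (c d k z0 z : R) :
  c * z0 + d <= exp (k * z0) -> c <= k * exp (k * z0) -> z0 <= z ->
  c * z + d <= exp (k * z).
Proof.
  intros H0 Hslope Hz.
  replace (k * z) with (k * z0 + k * (z - z0)) by ring. rewrite exp_plus.
  assert (H := exp_ineq1_le (k * (z - z0))). assert (0 < exp (k * z0)) by apply exp_pos.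
  nra.
Qed.

Lemma C_n_0 (n : nat) : Binomial.C n 0 = 1.
Proof. unfold Binomial.C. rewrite Nat.sub_0_r. simpl. field. apply INR_fact_neq_0. Qed.

Lemma C_n_n (n : nat) : Binomial.C n n = 1.
Proof. unfold Binomial.C. rewrite Nat.sub_diag. simpl. field. apply INR_fact_neq_0. Qed.

Lemma C_nonneg (n k : nat) : 0 <= Binomial.C n k.
Proof.
  unfold Binomial.C. apply Rmult_le_pos; [apply pos_INR|].
  left. apply Rinv_0_lt_compat, Rmult_lt_0_compat; apply INR_fact_lt_0.
Qed.

Lemma hockey_stick (n m : nat) :
  sum_f_R0 (fun k => Binomial.C (n + k) k) m = Binomial.C (n + m + 1) m.
Proof.
  induction m as [|m IH]; simpl sum_f_R0.
  - rewrite !C_n_0. reflexivity.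
  - rewrite IH. replace (n + m + 1)%nat with (n + S m)%nat by lia.
    replace (n + S m + 1)%nat with (S (n + S m)) by lia.
    apply pascal. lia.
Qed.

Lemma C_double_central (n : nat) :
  2 * Binomial.C (n + n + 1) n = Binomial.C (2 * S n) (S n).
Proof.
  replace (2 * S n)%nat with (S (n + n + 1)) by lia.
  rewrite <- pascal by lia.
  rewrite (pascal_step1 (n + n + 1) (S n)) by lia.
  replace (n + n + 1 - S n)%nat with n by lia. ring.
Qed.

Definition central_binom_prob (m : nat) : R := Binomial.C (2 * m) m / 4 ^ m.

Lemma central_binom_prob_pos (m : nat) : 0 < central_binom_prob m.
Proof.
  unfold central_binom_prob, Binomial.C. apply Rdiv_lt_0_compat; [|apply pow_lt; lra].
  apply Rdiv_lt_0_compat; [apply INR_fact_lt_0|].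
  apply Rmult_lt_0_compat; apply INR_fact_lt_0.
Qed.

Lemma central_binom_prob_succ (m : nat) :
  central_binom_prob (S m) * (2 * INR m + 2) = central_binom_prob m * (2 * INR m + 1).
Proof.
  unfold central_binom_prob, Binomial.C.
  replace (2 * S m)%nat with (S (S (2 * m))) by lia.
  replace (S (S (2 * m)) - S m)%nat with (S m) by lia.
  replace (2 * m - m)%nat with m by lia.
  rewrite !fact_simpl, !mult_INR, !S_INR, mult_INR. simpl (INR 2). simpl pow.
  assert (INR (fact m) <> 0) by apply INR_fact_neq_0.
  assert (INR (fact (2 * m)) <> 0) by apply INR_fact_neq_0.
  assert (0 <= INR m) by apply pos_INR.
  assert (0 < 4 ^ m) by (apply pow_lt; lra).
  field. repeat split; lra.
Qed.

Lemma central_binom_prob_sq_ge (n : nat) :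
  1 <= central_binom_prob (S n) ^ 2 * (16 / 5 * INR (S n) + 4 / 5).
Proof.
  induction n as [|n IH].
  - unfold central_binom_prob, Binomial.C. simpl. lra.
  - assert (Hstep := central_binom_prob_succ (S n)).
    assert (Hb := central_binom_prob_pos (S n)).
    rewrite (S_INR (S n)).
    set (m := INR (S n)) in *. set (b := central_binom_prob (S n)) in *.
    set (b' := central_binom_prob (S (S n))) in *.
    assert (Hm : 0 <= m) by apply pos_INR.
    assert (Hsq : (b' * (2 * m + 2)) ^ 2 * (16 / 5 * (m + 1) + 4 / 5)
                  = b ^ 2 * (2 * m + 2) ^ 2 * (16 / 5 * m + 4 / 5) + 4 / 5 * b ^ 2)
      by (rewrite Hstep; field).
    assert (0 < (2 * m + 2) ^ 2) by nra.
    assert ((2 * m + 2) ^ 2 <= b' ^ 2 * (16 / 5 * (m + 1) + 4 / 5) * (2 * m + 2) ^ 2) by nra.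
    nra.
Qed.

(* [negbin_cdf x y a b] is the probability that, in independent trials with success
   probability [x] and failure probability [y], the [S a]-th success comes before
   the [S b]-th failure. *)
Definition negbin_cdf (x y : R) (a b : nat) : R :=
  sum_f_R0 (fun k => Binomial.C (a + k) k * x ^ S a * y ^ k) b.

Lemma negbin_cdf_succ (x y : R) (a b : nat) :
  negbin_cdf x y (S a) (S b) = x * negbin_cdf x y a (S b) + y * negbin_cdf x y (S a) b.
Proof.
  unfold negbin_cdf. induction b as [|b IH].
  - simpl. rewrite <- (pascal (a + 1) 0) by lia. rewrite !C_n_0. ring.
  - set (f k := Binomial.C (S a + k) k * x ^ S (S a) * y ^ k) in *.
    set (g k := Binomial.C (a + k) k * x ^ S a * y ^ k) in *.
    change (sum_f_R0 f (S (S b))) with (sum_f_R0 f (S b) + f (S (S b))).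
    rewrite IH at 1.
    change (sum_f_R0 g (S (S b))) with (sum_f_R0 g (S b) + g (S (S b))).
    change (sum_f_R0 f (S b)) with (sum_f_R0 f b + f (S b)).
    unfold f, g. replace (S a + S (S b))%nat with (S (a + S (S b))) by lia.
    rewrite <- pascal by lia. replace (S a + S b)%nat with (a + S (S b))%nat by lia.
    simpl pow. ring.
Qed.

Lemma negbin_cdf_0_l (x y : R) (b : nat) : x + y = 1 -> negbin_cdf x y 0 b = 1 - y ^ S b.
Proof.
  intros Hxy. unfold negbin_cdf.
  rewrite (sum_eq _ (fun k => y ^ k * x)) by (intros k _; simpl; rewrite C_n_n; ring).
  rewrite <- scal_sum. replace x with (- (y - 1)) by lra.
  assert (H := GP_finite y b). rewrite Nat.add_1_r in H.
  change (fun n : nat => y ^ n) with (pow y) in H. lra.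
Qed.

Lemma negbin_cdf_0_r (x y : R) (a : nat) : negbin_cdf x y a 0 = x ^ S a.
Proof. unfold negbin_cdf. simpl. rewrite C_n_0. ring. Qed.

Lemma negbin_cdf_complement (x y : R) (a b : nat) : x + y = 1 ->
  negbin_cdf x y a b + negbin_cdf y x b a = 1.
Proof.
  intros Hxy. revert b. induction a as [|a IHa]; intros b.
  - rewrite negbin_cdf_0_l, negbin_cdf_0_r by lra. ring.
  - induction b as [|b IHb].
    + rewrite negbin_cdf_0_r, negbin_cdf_0_l by lra. ring.
    + rewrite !negbin_cdf_succ.
      transitivity (x * (negbin_cdf x y a (S b) + negbin_cdf y x (S b) a)
                    + y * (negbin_cdf x y (S a) b + negbin_cdf y x b (S a))); [ring|].
      rewrite IHa, IHb. lra.
Qed.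

Lemma negbin_cdf_diag_ge (q : R) (n : nat) : 0 < q < 1 ->
  q ^ S n * (1 - q) ^ n * Binomial.C (n + n + 1) n <= negbin_cdf q (1 - q) n n.
Proof.
  intros Hq. unfold negbin_cdf. rewrite <- hockey_stick, scal_sum. apply sum_Rle.
  intros k Hk.
  assert ((1 - q) ^ n <= (1 - q) ^ k) by (apply pow_antimono_le1; [lra | exact Hk]).
  assert (0 <= Binomial.C (n + k) k * q ^ S n)
    by (apply Rmult_le_pos; [apply C_nonneg | apply pow_le; lra]).
  nra.
Qed.

Lemma P_exact_negbin_cdf (q : R) (n : nat) :
  P_exact q (S n) = 2 * negbin_cdf q (1 - q) n n.
Proof.
  unfold P_exact. cbv zeta. replace (S n - 1)%nat with n by lia.
  rewrite (sum_eq _ (fun k => Binomial.C (n + k) k * (1 - q) ^ S n * q ^ k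
                              - Binomial.C (n + k) k * q ^ S n * (1 - q) ^ k))
    by (intros k _; replace (k + S n - 1)%nat with (n + k)%nat by lia; ring).
  rewrite minus_sum. fold (negbin_cdf (1 - q) q n n) (negbin_cdf q (1 - q) n n).
  assert (H := negbin_cdf_complement (1 - q) q n n ltac:(ring)). lra.
Qed.

Lemma P_exact_ge (q : R) (n : nat) : 0 < q < 1 ->
  (4 * (1 - q) * q) ^ S n * central_binom_prob (S n) / (1 - q) <= P_exact q (S n).
Proof.
  intros Hq. rewrite P_exact_negbin_cdf.
  assert (H := negbin_cdf_diag_ge q n Hq).
  assert (Hc := C_double_central n).
  unfold central_binom_prob. rewrite <- Hc, !Rpow_mult_distr.
  assert (0 < 4 ^ S n) by (apply pow_lt; lra).
  replace ((1 - q) ^ S n) with ((1 - q) * (1 - q) ^ n) by reflexivity.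
  apply Rle_trans with (2 * (q ^ S n * (1 - q) ^ n * Binomial.C (n + n + 1) n)); [|lra].
  right. field. lra.
Qed.

Lemma P_SN_le (q : R) (n : nat) : 0 < q < 1 / 2 ->
  P_SN q (S n) <= (4 * (1 - q) * q) ^ S n * exp (- (INR (S n) * psi q)).
Proof.
  intros Hq. unfold P_SN. cbv zeta. replace (S n - 1)%nat with n by lia.
  set (Z := INR (S n)). set (r := q / (1 - q)). set (w := 4 * (1 - q) * q).
  assert (HZ : 0 <= Z) by apply pos_INR.
  assert (Hr : 0 < r < 1).
  { unfold r. split; [apply Rdiv_lt_0_compat; lra|]. apply (Rmult_lt_reg_r (1 - q)); [lra|].
    unfold Rdiv. rewrite Rmult_assoc, Rinv_l by lra. lra. }
  assert (Hw : 0 < w) by (unfold w; nra).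
  replace (Z * q / (1 - q)) with (r * Z) by (unfold r; field; lra).
  set (E := exp (- (r * Z))).
  rewrite (sum_eq _ (fun k => (exp_term (r * Z) k - exp_term Z k * r ^ S n) * E)).
  2:{ intros k Hk. unfold exp_term. rewrite Rpow_mult_distr.
      replace (r ^ S n) with (r ^ k * r ^ (S n - k)) by (rewrite <- pow_add; f_equal; lia).
      unfold Rdiv. ring. }
  rewrite <- scal_sum, minus_sum, <- scal_sum.
  assert (Hpsi : exp (- (Z * psi q)) = E * exp Z * r ^ S n * (1 / w) ^ S n).
  { unfold psi. cbv zeta. fold r w. unfold E.
    rewrite <- !Rpower_pow by (try apply Rdiv_lt_0_compat; lra).
    unfold Rpower. rewrite <- !exp_plus. f_equal. unfold Z. ring. }
  assert (Hw1 : w ^ S n * (1 / w) ^ S n = 1)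
    by (rewrite <- Rpow_mult_distr; replace (w * (1 / w)) with 1 by (field; lra); apply pow1).
  assert (Htail := exp_tail_scale r Z n HZ ltac:(lra)).
  assert (HE : E * exp (r * Z) = 1)
    by (unfold E; rewrite <- exp_plus, Rplus_opp_l; apply exp_0).
  assert (0 < E) by apply exp_pos.
  assert (E * (exp (r * Z) - sum_f_R0 (exp_term (r * Z)) n)
          <= E * (r ^ S n * (exp Z - sum_f_R0 (exp_term Z) n)))
    by (apply Rmult_le_compat_l; lra).
  rewrite Hpsi.
  replace (w ^ S n * (E * exp Z * r ^ S n * (1 / w) ^ S n))
    with (E * exp Z * r ^ S n * (w ^ S n * (1 / w) ^ S n)) by ring.
  rewrite Hw1, Rmult_1_r.
  nra.
Qed.

Lemma psi_eq (q : R) : 0 < q < 1 ->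
  psi q = 1 / (1 - q) - 2 + 2 * ln (2 * (1 - q)).
Proof.
  intros Hq. unfold psi. cbv zeta.
  assert (0 < 1 - q) by lra.
  unfold Rdiv. rewrite Rmult_1_l, ln_Rinv by nra.
  rewrite !ln_mult by (try apply Rinv_0_lt_compat; nra).
  rewrite ln_Rinv by lra. replace 4 with (2 * 2) by ring. rewrite ln_mult by lra.
  field. lra.
Qed.

Lemma psi_bounds (q : R) : 0 < q < 1 / 2 -> 0 < psi q <= 1 / 2.
Proof.
  intros Hq. rewrite psi_eq by lra. set (x := 2 * (1 - q)).
  assert (Hx : 1 < x < 2) by (unfold x; lra).
  replace (1 / (1 - q)) with (2 / x) by (unfold x; field; lra).
  split.
  - assert (Hlnx : 0 < ln x) by (rewrite <- ln_1; apply ln_increasing; lra).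
    assert (H := exp_ineq1 (- ln x) ltac:(lra)). rewrite exp_Ropp, exp_ln in H by lra.
    unfold Rdiv. lra.
  - assert (Hln2 : ln 2 < 3 / 4).
    { rewrite <- (ln_exp (3 / 4)). apply ln_increasing; [lra|].
      assert (H := exp_ge_cubic (3 / 4) ltac:(lra)). lra. }
    assert (H := exp_ineq1_le (ln (x / 2))).
    rewrite exp_ln in H by lra. unfold Rdiv in H.
    rewrite ln_mult, ln_Rinv in H by lra.
    assert (2 / x + x <= 3).
    { apply (Rmult_le_reg_r x); [lra|].
      unfold Rdiv. rewrite Rmult_plus_distr_r, Rmult_assoc, Rinv_l by lra. nra. }
    lra.
Qed.

(* The second argument of the [Rmax] in [z0_star]. *)
Definition z_growth (ps : R) : R :=
  1 / (2 * sqrt 2) - (1 + 1 / sqrt 2) / 2 * (ln (2 * ps / PI) / ps).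

Lemma PI_exp_ge (u v : R) : 0 <= v <= u -> 16 / 5 * (sqrt 2 + 1) * v <= PI * exp u.
Proof.
  intros Hvu.
  assert (Hs2 : sqrt 2 * sqrt 2 = 2) by (apply sqrt_sqrt; lra).
  assert (Hs0 := Rlt_sqrt2_0).
  assert (Hs : sqrt 2 <= 3 / 2) by nra.
  assert (HPI : 3 < PI) by (assert (H := PI2_3_2); lra).
  assert (He := exp_1_ge). assert (Heu := exp_ge_e_mul u).
  assert (16 / 5 * (sqrt 2 + 1) <= PI * exp 1) by nra.
  nra.
Qed.

Lemma z_growth_eq (ps : R) : 0 < ps ->
  2 * ps * z_growth ps = ps / sqrt 2 + (sqrt 2 + 1) * (ln (PI / (2 * ps)) / sqrt 2).
Proof.
  intros Hps. assert (HPI := PI_RGT_0). assert (Hs := Rlt_sqrt2_0).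
  unfold z_growth. replace (2 * ps / PI) with (/ (PI / (2 * ps))) by (field; lra).
  rewrite ln_Rinv by (apply Rdiv_lt_0_compat; lra). field. lra.
Qed.

Lemma exp_z_growth (ps : R) : 0 < ps ->
  2 * ps * exp (2 * ps * z_growth ps)
  = PI * exp (ln (PI / (2 * ps)) / sqrt 2) * exp (ps / sqrt 2).
Proof.
  intros Hps. assert (HPI := PI_RGT_0). assert (Hs := Rlt_sqrt2_0).
  rewrite z_growth_eq by exact Hps.
  replace ((sqrt 2 + 1) * (ln (PI / (2 * ps)) / sqrt 2))
    with (ln (PI / (2 * ps)) + ln (PI / (2 * ps)) / sqrt 2) by (field; lra).
  rewrite !exp_plus, exp_ln by (apply Rdiv_lt_0_compat; lra). field. lra.
Qed.

Lemma exp_growth_beyond_threshold (ps z : R) : 0 < ps <= 1 / 2 -> z_growth ps <= z ->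
  16 / 5 * z + 4 / 5 <= exp (2 * ps * z).
Proof.
  intros Hps Hz.
  set (s := sqrt 2). set (t := PI / (2 * ps)). set (u := ln t / s).
  assert (Hs2 : s * s = 2) by (apply sqrt_sqrt; lra).
  assert (Hs : 0 < s) by apply Rlt_sqrt2_0.
  assert (Hexp := exp_z_growth ps ltac:(lra)). fold s t u in Hexp.
  assert (Hu : 1 / s <= u).
  { assert (Ht : exp 1 < t).
    { assert (H := exp_le_3). assert (H' := PI2_3_2).
      apply (Rmult_lt_reg_l (2 * ps)); [lra|]. unfold t.
      replace (2 * ps * (PI / (2 * ps))) with PI by (field; lra). nra. }
    unfold u, Rdiv. apply Rmult_le_compat_r; [left; apply Rinv_0_lt_compat; lra|].
    rewrite <- ln_exp at 1. left. apply ln_increasing; [apply exp_pos | exact Ht]. }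
  assert (Hinvs : 0 < 1 / s) by (apply Rdiv_lt_0_compat; lra).
  assert (Hslope : 16 / 5 + 8 / 5 * s <= PI * exp u).
  { assert (H := PI_exp_ge u (1 / s) ltac:(lra)). fold s in H.
    replace (16 / 5 * (s + 1) * (1 / s)) with (16 / 5 + 16 / 5 * (1 / s)) in H
      by (field; lra).
    replace (1 / s) with (s / 2) in H by (rewrite <- Hs2; field; lra). lra. }
  assert (Hvalue := PI_exp_ge u u ltac:(lra)). fold s in Hvalue.
  assert (Hexps : 1 + ps / s <= exp (ps / s)) by apply exp_ineq1_le.
  assert (0 < ps / s) by (apply Rdiv_lt_0_compat; lra).
  apply (linear_le_exp_beyond _ _ _ (z_growth ps)); [| nra | exact Hz].
  apply (Rmult_le_reg_l (2 * ps)); [lra|]. rewrite Hexp.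
  replace (2 * ps * (16 / 5 * z_growth ps + 4 / 5))
    with (16 / 5 * (2 * ps * z_growth ps) + 8 / 5 * ps) by field.
  rewrite z_growth_eq by lra. fold s t u.
  replace (16 / 5 * (ps / s + (s + 1) * u) + 8 / 5 * ps)
    with (16 / 5 * (s + 1) * u + ps / s * (16 / 5 + 8 / 5 * s)) by (field; lra).
  nra.
Qed.

Lemma exp_neg_le_central_binom_prob (ps : R) (n : nat) :
  0 < ps <= 1 / 2 -> z_growth ps <= INR (S n) ->
  exp (- (INR (S n) * ps)) <= central_binom_prob (S n).
Proof.
  intros Hps Hz.
  set (Z := INR (S n)) in *. set (a := exp (- (Z * ps))). set (b := central_binom_prob (S n)).
  assert (Hgrowth := exp_growth_beyond_threshold ps Z Hps Hz).
  assert (Hb2 := central_binom_prob_sq_ge n). fold Z b in Hb2.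
  assert (Ha2 : a ^ 2 * exp (2 * ps * Z) = 1).
  { unfold a. simpl pow. rewrite Rmult_1_r, <- !exp_plus. rewrite <- exp_0. f_equal. ring. }
  assert (0 < a) by apply exp_pos.
  assert (0 < b) by apply central_binom_prob_pos.
  assert (0 < Z) by (apply lt_0_INR; lia).
  assert (a ^ 2 <= b ^ 2) by nra.
  nra.
Qed.

Lemma ceilZ_le (x : R) (k : Z) : (ceilZ x <= k)%Z -> x <= IZR k.
Proof.
  unfold ceilZ. intros Hk. apply IZR_le in Hk. rewrite opp_IZR in Hk.
  destruct (base_Int_part (- x)). lra.
Qed.

Theorem mainTheorem17 (q : R) (hq0 : 0 < q) (hq1 : q < 1 / 2) (z : nat) :
  (1 <= z)%nat -> (z0 q <= Z.of_nat z)%Z -> P_SN q z < P_exact q z.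
Proof.
  intros Hz1 Hz0. destruct z as [|n]; [lia|].
  assert (Hps := psi_bounds q ltac:(lra)).
  assert (Hthr : z_growth (psi q) <= INR (S n)).
  { apply Rle_trans with (z0_star q); [apply Rmax_r|].
    rewrite INR_IZR_INZ. apply ceilZ_le, Hz0. }
  set (W := (4 * (1 - q) * q) ^ S n). set (b := central_binom_prob (S n)).
  assert (HWb : 0 < W * b)
    by (apply Rmult_lt_0_compat; [apply pow_lt; nra | apply central_binom_prob_pos]).
  apply Rle_lt_trans with (W * b).
  - eapply Rle_trans; [apply P_SN_le; lra|].
    apply Rmult_le_compat_l; [left; apply pow_lt; nra|].
    apply exp_neg_le_central_binom_prob; assumption.
  - eapply Rlt_le_trans; [|apply P_exact_ge; lra]. fold W b.
    apply (Rmult_lt_reg_r (1 - q)); [lra|].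
    replace (W * b / (1 - q) * (1 - q)) with (W * b) by (field; lra). nra.
Qed.
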